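(* Let $\alpha\ge 1$. Suppose that every canonical instance admits an $\alpha$-WMMS allocation. Then every chore-allocation instance (with positive weights and nonnegative additive cost functions) admits a $4\alpha$-WMMS allocation.
   Context: A chore-allocation instance consists of a set $\mathcal N=\{a_1,\dots,a_n\}$ of agents, a finite set $\mathcal M=\{e_1,\dots,e_m\}$ of indivisible items (chores), positive weights $w_1,\dots,w_n$, and additive cost functions $v_i:2^{\mathcal M}\to\mathbb R_{\ge 0}$, i.e. $v_i(S)=\sum_{e\in S}v_i(e)$. An allocation is an ordered partition $(A_1,\dots,A_n)$ of $\mathcal M$ (bundles may be empty); $\mathcal A$ denotes the set of all allocations. The weighted maximin share of agent $a_i$ is $\mathsf{WMMS}_i=w_i\cdot\min_{(A_1,\dots,A_n)\in\mathcal A}\max_{j\in[n]}\frac{v_i(A_j)}{w_j}$. For $\alpha\ge1$, an allocation $(A_1,\dots,A_n)$ is $\alpha$-WMMS if $v_i(A_i)\le\alpha\cdot\mathsf{WMMS}_i$ for every agent $a_i$. An instance is canonical if: (i) agents are indexed so that $w_1\ge w_2\ge\cdots\ge w_n$, $\sum_i w_i=1$, and every $w_i=w_1/2^p$ for some nonnegative integer $p$; (ii) $v_i(\mathcal M)=1$ for every agent, and for every agent $a_i$ and item $e$, $v_i(e)$ is either $0$ or equal to $w_1/2^p$ for some nonnegative integer $p$; (iii) (identical ordering) $v_i(e_1)\ge v_i(e_2)\ge\cdots\ge v_i(e_m)$ for every agent $a_i$; (iv) $\mathsf{WMMS}_i=w_i$ for every agent $a_i$. *)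

From HB Require Import structures.
From mathcomp Require Import all_boot all_order all_algebra.
From mathcomp Require Import reals.
Set Implicit Arguments. Unset Strict Implicit. Unset Printing Implicit Defensive.
Import Order.TTheory GRing.Theory Num.Theory.
Local Open Scope ring_scope.

(* An allocation (ordered partition (A_1,..,A_n) of M, bundles possibly empty)
   is a function A : {ffun 'I_m -> 'I_n.+1}; A_j = [set e | A e == j]. *)

Section Defs.
Variables (R : realType) (n m : nat).
Implicit Types (w : 'I_n.+1 -> R) (v : 'I_n.+1 -> 'I_m -> R)
  (A : {ffun 'I_m -> 'I_n.+1}).

Definition bundle_cost v A (i j : 'I_n.+1) : R := \sum_(e | A e == j) v i e.

(* max_j v_i(A_j) / w_j  (costs are nonnegative, so 0 is a neutral start) *)
Definition max_share w v (i : 'I_n.+1) A : R :=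
  \big[Num.max/0]_(j < n.+1) (bundle_cost v A i j / w j).

(* WMMS_i = w_i * min_{A allocation} max_j v_i(A_j)/w_j ;
   the min over the finite nonempty set of allocations is taken with the
   (idempotent) seed max_share of the allocation giving everything to agent 0 *)
Definition WMMS w v (i : 'I_n.+1) : R :=
  w i * \big[Num.min/max_share w v i [ffun=> ord0]]_(A : {ffun 'I_m -> 'I_n.+1})
          max_share w v i A.

Definition is_alpha_WMMS (alpha : R) w v A : Prop :=
  forall i : 'I_n.+1, bundle_cost v A i i <= alpha * WMMS w v i.

Definition valid_instance w v : Prop :=
  (forall i, 0 < w i) /\ (forall i e, 0 <= v i e).

(* canonical instance (conditions (i)-(iv)); agent a_1 is index ord0 *)
Definition canonical_instance w v : Prop :=
  [/\ valid_instance w v,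
      (forall i j : 'I_n.+1, (i <= j)%N -> w j <= w i)
      /\ \sum_(i < n.+1) w i = 1
      /\ (forall i, exists p : nat, w i = w ord0 / 2%:R ^+ p),
      (forall i, \sum_(e < m) v i e = 1)
      /\ (forall i e, v i e = 0 \/ exists p : nat, v i e = w ord0 / 2%:R ^+ p),
      (forall i (e e' : 'I_m), (e <= e')%N -> v i e' <= v i e)
    &
      (forall i, WMMS w v i = w i)].

End Defs.

From mathcomp Require Import all_boot all_order all_algebra.
From mathcomp Require Import reals perm.
From mathcomp Require Import ring lra.
Set Implicit Arguments. Unset Strict Implicit. Unset Printing Implicit Defensive.
Import Order.TTheory GRing.Theory Num.Theory.
Local Open Scope ring_scope.

(* For every agent i fix an allocation P_i attaining her maximin share, so
   that its bundles cost her at most mu_i w_j, where mu_i = WMMS_i / w_i.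
   Rounding every weight down to w_1 / 2^p and renormalising gives weights
   wcan with beta w_j < wcan_j <= 2 beta w_j.  Scaling the costs of agent i by
   beta / (2 mu_i) and rounding them up to powers of two times a tiny tick
   makes every bundle of P_i cost less than wcan_j; padding it with filler
   chores of cost one tick makes it cost exactly wcan_j, so that
   WMMS_i = wcan_i in the new instance.  Listing each agent's chores by
   decreasing cost makes the ordering identical, so the new instance is
   canonical.  A picking sequence turns an alpha-WMMS allocation of it back
   into an allocation of the real chores, losing a factor 2 for the weights
   and a factor 2 for the costs. *)

Lemma exists_sorting_perm (d : Order.disp_t) (T : orderType d) (N : nat)
    (f : 'I_N -> T) :
  exists s : 'S_N, forall k k' : 'I_N, (k <= k')%N -> (f (s k') <= f (s k))%O.
Proof.
pose r a b := (f b <= f a)%O.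
pose s := sort r (enum 'I_N).
have size_s : size s = N by rewrite size_sort size_enum_ord.
have nth_inj : injective (fun k : 'I_N => nth k s k).
  move=> k k'; rewrite (set_nth_default k') ?size_s // => /eqP.
  by rewrite nth_uniq ?size_s ?sort_uniq ?enum_uniq // => /eqP /val_inj.
exists (perm nth_inj) => k k' le_kk'; rewrite !permE (set_nth_default k) ?size_s //.
have r_trans : transitive r by move=> a b c /= h1 h2; exact: le_trans h2 h1.
apply: (sorted_leq_nth r_trans (fun a => lexx _)) => //; last by rewrite inE size_s.
  by apply: sort_sorted => a b; exact: le_total.
by rewrite inE size_s.
Qed.

Lemma bigmin_attained (d : Order.disp_t) (T : orderType d) (I : finType)
    (F : I -> T) (x0 : I) :
  exists i, \big[Order.min/F x0]_j F j = F i.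
Proof.
apply: (big_ind (fun y => exists i, y = F i)); first by exists x0.
- by move=> _ _ [i ->] [j ->]; case: (leP (F i) (F j)); [exists i | exists j].
- by move=> i _; exists i.
Qed.

Lemma exists_rank_ge (T : finType) (r : T -> nat) (S : {set T}) :
  {in S &, injective r} -> (0 < #|S|)%N -> exists2 e, e \in S & (#|S|.-1 <= r e)%N.
Proof.
move=> r_inj S_gt0.
case: (boolP [exists e in S, (#|S|.-1 <= r e)%N]) => [/exists_inP[e eS le]|/exists_inPn small].
  by exists e.
have: (size (map r (enum S)) <= size (iota 0 #|S|.-1))%N.
  apply: uniq_leq_size => [|_ /mapP[e eS ->]].
    by rewrite map_inj_in_uniq ?enum_uniq // => x y; rewrite !mem_enum; exact: r_inj.
  by rewrite mem_iota /= ltnNge small // -mem_enum.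
by rewrite size_map size_iota -cardE; case: #|S| S_gt0 => // k _; rewrite ltnn.
Qed.

(* Cut the first [\sum_j c j] positions into consecutive blocks of sizes
   [c 0], [c 1], ...; position [t] is sent to the index of its block, and the
   remaining positions to the junk index [ord0]. *)
Definition block_index (B F : nat) (c : 'I_B.+1 -> nat) : {ffun 'I_F -> 'I_B.+1} :=
  [ffun t : 'I_F => nth ord0 (flatten [seq nseq (c j) j | j <- enum 'I_B.+1]) t].

Lemma card_block_index (B F : nat) (c : 'I_B.+1 -> nat) : (\sum_j c j <= F)%N ->
  forall j, #|[pred t : 'I_F | (t < \sum_j c j)%N && (block_index F c t == j)]| = c j.
Proof.
move=> le_F j.
pose s := flatten [seq nseq (c j) j | j <- enum 'I_B.+1].
have size_s : size s = (\sum_j c j)%N.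
  rewrite size_flatten /shape -map_comp sumnE big_map big_enum.
  by apply: eq_bigr => k _; rewrite /= size_nseq.
rewrite -sum1_card (eq_bigl (fun t : 'I_F => (t < size s)%N && (nth ord0 s t == j))); last first.
  by move=> t; rewrite inE ffunE size_s.
rewrite -(big_mkord (fun t => (t < size s)%N && (nth ord0 s t == j)) (fun _ => 1%N)).
rewrite sum1_count /index_iota subn0 -(subnKC le_F) -size_s iotaD count_cat add0n.
rewrite (@eq_in_count _ _ pred0 (iota (size s) _)); last first.
  by move=> t; rewrite mem_iota => /andP[le_t _] /=; rewrite ltnNge le_t.
rewrite count_pred0 addn0 (@eq_in_count _ _ (fun t => nth ord0 s t == j)); last first.
  by move=> t; rewrite mem_iota add0n => /andP[_ lt_t] /=; rewrite lt_t.
rewrite -(count_map _ (pred1 j)) -/(mkseq _ _) mkseq_nth count_flatten -map_comp.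
rewrite sumnE big_map big_enum /=.
rewrite (bigD1 j) //= count_nseq /= eqxx mul1n big1 ?addn0 // => k ne_kj.
by rewrite count_nseq /= (negbTE ne_kj).
Qed.

Definition alpha_WMMS_on_canonical (R : realType) (alpha : R) : Prop :=
  forall (n m : nat) (w : 'I_n.+1 -> R) (v : 'I_n.+1 -> 'I_m -> R),
    canonical_instance w v -> exists A : {ffun 'I_m -> 'I_n.+1}, is_alpha_WMMS alpha w v A.

Section AllocationCosts.
Variables (R : realType) (n m : nat) (w : 'I_n.+1 -> R) (v : 'I_n.+1 -> 'I_m -> R).
Hypotheses (w_gt0 : forall i, 0 < w i) (v_ge0 : forall i e, 0 <= v i e).

Lemma sum_bundle_cost A i : \sum_j bundle_cost v A i j = \sum_e v i e.
Proof. by rewrite (partition_big A predT). Qed.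

Lemma bundle_cost_ge0 A i j : 0 <= bundle_cost v A i j.
Proof. exact: sumr_ge0. Qed.

Lemma bundle_cost_le_max_share A i j : bundle_cost v A i j <= max_share w v i A * w j.
Proof.
rewrite -ler_pdivrMr //.
exact: (le_bigmax 0 (fun j => bundle_cost v A i j / w j) j).
Qed.

Lemma max_share_ge0 A i : 0 <= max_share w v i A.
Proof.
apply: le_trans (le_bigmax 0 (fun j => bundle_cost v A i j / w j) ord0).
by rewrite divr_ge0 ?bundle_cost_ge0 ?ltW.
Qed.

Lemma WMMS_le_max_share A i : WMMS w v i <= w i * max_share w v i A.
Proof. by rewrite ler_pM2l //; exact: bigmin_le. Qed.

Lemma WMMS_attained i : exists A, WMMS w v i = w i * max_share w v i A.
Proof.
by have [A eqA] := bigmin_attained (max_share w v i) [ffun=> ord0]; exists A; rewrite /WMMS eqA.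
Qed.

Lemma WMMS_eq_weight i A : \sum_e v i e = \sum_j w j ->
  (forall j, bundle_cost v A i j <= w j) -> WMMS w v i = w i.
Proof.
move=> total_eq A_le_w.
have sum_w_gt0 : 0 < \sum_j w j.
  by rewrite (bigD1 ord0) //= ltr_pwDl // sumr_ge0 // => j _; exact: ltW.
apply/le_anti/andP; split.
  apply: le_trans (WMMS_le_max_share A i) _.
  rewrite -{2}(mulr1 (w i)) ler_pM2l //; apply: bigmax_le => // j _.
  by rewrite ler_pdivrMr // mul1r.
have [B ->] := WMMS_attained i; rewrite -{1}(mulr1 (w i)) ler_pM2l //.
rewrite -(ler_pM2r sum_w_gt0) mul1r mulr_sumr -{1}total_eq -(sum_bundle_cost B).
by apply: ler_sum => j _; exact: bundle_cost_le_max_share.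
Qed.

End AllocationCosts.

Section PickingSequence.
Variables (R : realType) (n m : nat) (v : 'I_n.+1 -> 'I_m -> R)
  (rho : 'I_n.+1 -> 'S_m) (o : 'I_m -> 'I_n.+1).
Hypothesis rho_sorted :
  forall i (k k' : 'I_m), (k <= k')%N -> v i (rho i k') <= v i (rho i k).

(* Backwards induction: whoever picks at the last position [#|S|.-1] takes a
   chore that she ranks at that position or later, hence one costing her no
   more than her chore of that rank. *)
Lemma picking_sequence_on (S : {set 'I_m}) :
  exists f : 'I_m -> 'I_n.+1, forall i,
    \sum_(e in S | f e == i) v i e
      <= \sum_(k : 'I_m | (k < #|S|)%N && (o k == i)) v i (rho i k).
Proof.
move cS: #|S| => s; elim: s S cS => [|s IH] S cS.
  exists (fun=> ord0) => i; rewrite big_pred0 ?big_pred0 // => e.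
  by rewrite (cards0_eq cS) inE.
have lt_sm : (s < m)%N by rewrite -cS; apply: leq_trans (max_card S) _; rewrite card_ord.
pose ks := Ordinal lt_sm; pose a := o ks.
have [es esS rank_es] : exists2 e, e \in S & (s <= ((rho a)^-1)%g e)%N.
  have := @exists_rank_ge _ (fun e => val (((rho a)^-1)%g e)) S; rewrite cS; apply => //.
  by move=> x y _ _ /val_inj /perm_inj.
have v_es : v a es <= v a (rho a ks) by rewrite -{1}(permKV (rho a) es); exact: rho_sorted.
have [f' hf'] : exists f' : 'I_m -> 'I_n.+1, forall i,
    \sum_(e in S :\ es | f' e == i) v i e
      <= \sum_(k : 'I_m | (k < s)%N && (o k == i)) v i (rho i k).
  by apply: IH; move: cS; rewrite (cardsD1 es) esS => -[].
exists (fun e => if e == es then a else f' e) => i.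
rewrite !big_mkcondr /= (big_setD1 es esS) [X in _ <= X](bigD1 ks) //= eqxx; apply: lerD.
  by rewrite -/a; case: (a =P i) => [<-|]; rewrite ?lexx.
rewrite [X in _ <= X](eq_bigl (fun k : 'I_m => (k < s)%N)) => [|k]; last first.
  by rewrite ltnS ltn_neqAle andbC -val_eqE.
rewrite -!big_mkcondr (eq_bigl (fun e => (e \in S :\ es) && (f' e == i))) ?hf' // => e.
by case: (e =P es) => [->|]; rewrite ?setD11.
Qed.

Lemma picking_sequence : exists A : {ffun 'I_m -> 'I_n.+1}, forall i,
  bundle_cost v A i i <= \sum_(k | o k == i) v i (rho i k).
Proof.
have [f hf] := picking_sequence_on setT.
exists [ffun e => f e] => i.
have := hf i; rewrite cardsT card_ord /bundle_cost.
rewrite (eq_bigl (fun e => f e == i)) => [|e]; last by rewrite in_setT.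
rewrite [X in _ <= X -> _](eq_bigl (fun k : 'I_m => o k == i)) => [|k]; last by rewrite ltn_ord.
by move=> le_f; under eq_bigl do rewrite ffunE.
Qed.

End PickingSequence.

Lemma exists_pow2_gt (R : realType) (x : R) : exists k : nat, x < 2 ^+ k.
Proof.
have [x_le0|x_gt0] := leP x 0; first by exists 0%N; rewrite expr0 (le_lt_trans x_le0).
exists (Num.Def.archi_bound x); apply: lt_le_trans (archi_boundP (ltW x_gt0)) _.
by rewrite -natrX ler_nat; apply: ltnW; exact: ltn_expl.
Qed.

Definition log2_up (R : realType) (x : R) := ex_minn (exists_pow2_gt x).

Lemma lt_pow2_log2_up (R : realType) (x : R) : x < 2 ^+ log2_up x.
Proof. by rewrite /log2_up; case: ex_minnP. Qed.

Section WeightRounding.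
Variables (R : realType) (n : nat) (w : 'I_n.+1 -> R).
Hypotheses (w_gt0 : forall i, 0 < w i)
  (w_sorted : forall i j : 'I_n.+1, (i <= j)%N -> w j <= w i).

Lemma exists_halving_le j : exists p : nat, w ord0 / 2 ^+ p <= w j.
Proof.
have [p lt_p] := exists_pow2_gt (w ord0 / w j); exists p.
by rewrite ler_pdivrMr ?exprn_gt0 // mulrC -ler_pdivrMr // ltW.
Qed.

Definition wexp j := ex_minn (exists_halving_le j).

Lemma wexp_le j : w ord0 / 2 ^+ wexp j <= w j.
Proof. by rewrite /wexp; case: ex_minnP. Qed.

Lemma wexp_min j p : w ord0 / 2 ^+ p <= w j -> (wexp j <= p)%N.
Proof. by rewrite /wexp; case: ex_minnP => q _; apply. Qed.

Lemma wexp_gt j : w j < 2 * (w ord0 / 2 ^+ wexp j).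
Proof.
case E: (wexp j) => [|p].
  by rewrite expr0 divr1 (le_lt_trans (@w_sorted ord0 j (leq0n _))) // ltr_pMl ?ltr1n.
have -> : 2 * (w ord0 / 2 ^+ p.+1) = w ord0 / 2 ^+ p.
  by rewrite exprS; field; rewrite expf_neq0 ?pnatr_eq0.
by rewrite ltNge; apply/negP => /wexp_min; rewrite E ltnn.
Qed.

Lemma wexp0 : wexp ord0 = 0%N.
Proof. by apply/eqP; rewrite -leqn0 wexp_min // expr0 divr1. Qed.

Lemma wexp_mono (i j : 'I_n.+1) : (i <= j)%N -> (wexp i <= wexp j)%N.
Proof. by move=> le_ij; apply/wexp_min/(le_trans (wexp_le j))/w_sorted. Qed.

Definition wnorm := \sum_j (2 ^+ wexp j)^-1 : R.
Definition wcan j := (2 ^+ wexp j)^-1 / wnorm.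
Definition wscale := (2 * wnorm * w ord0)^-1.

Lemma wnorm_gt0 : 0 < wnorm.
Proof.
rewrite /wnorm (bigD1 ord0) //= ltr_pwDl ?invr_gt0 ?exprn_gt0 // sumr_ge0 // => j _.
by rewrite invr_ge0 exprn_ge0.
Qed.

Lemma wcan_gt0 j : 0 < wcan j.
Proof. by rewrite divr_gt0 ?invr_gt0 ?exprn_gt0 ?wnorm_gt0. Qed.

Lemma sum_wcan : \sum_j wcan j = 1.
Proof. by rewrite -mulr_suml divff // gt_eqF ?wnorm_gt0. Qed.

Lemma wcanE j : wcan j = wcan ord0 / 2 ^+ wexp j.
Proof. by rewrite /wcan wexp0 expr0 invr1 mul1r mulrC. Qed.

Lemma wcan_sorted (i j : 'I_n.+1) : (i <= j)%N -> wcan j <= wcan i.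
Proof.
move=> le_ij; rewrite ler_pM2r ?invr_gt0 ?wnorm_gt0 // lef_pV2 ?posrE ?exprn_gt0 //.
by rewrite ler_eXn2l ?ltr1n // wexp_mono.
Qed.

Lemma wcan_le_wcan0 j : wcan j <= wcan ord0.
Proof. exact: (@wcan_sorted ord0 j). Qed.

Lemma wscale_gt0 : 0 < wscale.
Proof. by rewrite invr_gt0 !mulr_gt0 ?wnorm_gt0. Qed.

Lemma wcan_wscale j : wcan j = 2 * wscale * (w ord0 / 2 ^+ wexp j).
Proof.
rewrite /wcan /wscale; field.
by rewrite expf_neq0 ?pnatr_eq0 // !gt_eqF ?w_gt0 ?wnorm_gt0.
Qed.

Lemma wscale_lt_wcan j : wscale * w j < wcan j.
Proof. by rewrite wcan_wscale -mulrA mulrCA ltr_pM2l ?wscale_gt0 ?wexp_gt. Qed.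

Lemma wcan_le_wscale j : wcan j <= 2 * wscale * w j.
Proof. by rewrite wcan_wscale ler_pM2l ?mulr_gt0 ?wscale_gt0 ?wexp_le. Qed.

End WeightRounding.

Section CostRounding.
Variables (R : realType) (tick : R) (cap : nat).
Hypothesis tick_gt0 : 0 < tick.

Lemma exists_round_exp (x : R) : exists k : nat, (x <= tick * 2 ^+ k) || (cap <= k)%N.
Proof. by exists cap; rewrite leqnn orbT. Qed.

Definition round_exp x := ex_minn (exists_round_exp x).
Definition round_up x := tick * 2 ^+ round_exp x.

Lemma round_exp_le_cap x : (round_exp x <= cap)%N.
Proof. by rewrite /round_exp; case: ex_minnP => k _; apply; rewrite leqnn orbT. Qed.

Lemma round_exp_mono : {homo round_exp : x y / x <= y >-> (x <= y)%N}.
Proof.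
move=> x y le_xy; rewrite [round_exp y]/round_exp; case: ex_minnP => k /orP[le_y|le_cap] _.
  by rewrite /round_exp; case: ex_minnP => k' _; apply; rewrite (le_trans le_xy).
by apply: leq_trans (round_exp_le_cap x) le_cap.
Qed.

Lemma le_round_up x : x <= tick * 2 ^+ cap -> x <= round_up x.
Proof.
rewrite /round_up /round_exp; case: ex_minnP => k /orP[//|le_cap] min_k le_x.
by have /eqP -> : k == cap by rewrite eqn_leq le_cap min_k // leqnn orbT.
Qed.

Lemma round_up_le x : 0 <= x -> round_up x <= 2 * x + tick.
Proof.
rewrite /round_up /round_exp; case: ex_minnP => -[|k] _ min_k x_ge0.
  by rewrite expr0 mulr1 lerDr mulr_ge0.
have: ~~ ((x <= tick * 2 ^+ k) || (cap <= k)%N) by apply/negP => /min_k; rewrite ltnn.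
rewrite negb_or -ltNge => /andP[lt_x _].
by rewrite exprS mulrCA; have := tick_gt0; lra.
Qed.

End CostRounding.

Section CanonicalInstance.
Variables (R : realType) (n m : nat) (w : 'I_n.+1 -> R) (v : 'I_n.+1 -> 'I_m -> R).
Hypotheses (w_gt0 : forall i, 0 < w i) (v_ge0 : forall i e, 0 <= v i e)
  (w_sorted : forall i j : 'I_n.+1, (i <= j)%N -> w j <= w i).
Variables (rho : 'I_n.+1 -> 'S_m) (mu : 'I_n.+1 -> R)
  (P : 'I_n.+1 -> {ffun 'I_m -> 'I_n.+1}).
Hypotheses (rho_sorted : forall i (k k' : 'I_m), (k <= k')%N -> v i (rho i k') <= v i (rho i k))
  (mu_ge0 : forall i, 0 <= mu i)
  (P_bounded : forall i j, bundle_cost v (P i) i j <= mu i * w j).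

Local Notation wexp := (wexp w_gt0).
Local Notation wcan := (wcan w_gt0).
Local Notation wscale := (wscale w_gt0).

Let gap j := wcan j - wscale * w j.

Lemma gap_gt0 j : 0 < gap j.
Proof. by rewrite subr_gt0 wscale_lt_wcan. Qed.

(* Large enough for the rounding errors of all m chores, m ticks, to fit into
   the gap between [wscale * w j] and [wcan j]. *)
Definition cap := (\max_j maxn (wexp j) (log2_up (m%:R * wcan ord0 / gap j)))%N.
Definition tick := wcan ord0 / 2 ^+ cap.

Lemma tick_gt0 : 0 < tick.
Proof. by rewrite divr_gt0 ?wcan_gt0 ?exprn_gt0. Qed.

Lemma wexp_le_cap j : (wexp j <= cap)%N.
Proof. exact: leq_trans (leq_maxl _ _) (leq_bigmax j). Qed.

Lemma m_tick_lt_gap j : m%:R * tick < gap j.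
Proof.
have lt_pow : m%:R * wcan ord0 / gap j < 2 ^+ cap.
  apply: lt_le_trans (lt_pow2_log2_up _) _; rewrite ler_eXn2l ?ltr1n //.
  exact: leq_trans (leq_maxr _ _) (leq_bigmax j).
by rewrite /tick mulrA ltr_pdivrMr ?exprn_gt0 // -ltr_pdivrMl ?gap_gt0 // mulrC.
Qed.

Lemma wcan_ticks j : wcan j = tick * (2 ^ (cap - wexp j))%:R.
Proof.
rewrite wcanE /tick natrX -{1}(subnKC (wexp_le_cap j)) exprD.
by rewrite invfM mulrA mulfVK // expf_neq0 ?pnatr_eq0.
Qed.

(* Division by zero makes this [0] when [mu i = 0]; agent i then has no
   costs at all (v_eq0_of_mu_eq0). *)
Definition cscale i := wscale / (2 * mu i).

Lemma cscale_ge0 i : 0 <= cscale i.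
Proof. by rewrite divr_ge0 ?mulr_ge0 // ltW ?wscale_gt0. Qed.

Lemma cscale_mulr_le i j x : 0 <= x -> x <= mu i * w j -> 2 * cscale i * x <= wscale * w j.
Proof.
move=> x_ge0 le_x; have [mu0|mu_neq0] := eqVneq (mu i) 0.
  by rewrite /cscale mu0 mulr0 invr0 !mulr0 mul0r mulr_ge0 // ltW ?wscale_gt0.
have mu_gt0 : 0 < mu i by rewrite lt_def mu_neq0 mu_ge0.
have -> : 2 * cscale i * x = wscale * (x / mu i) by rewrite /cscale; field.
by rewrite ler_pM2l ?wscale_gt0 // ler_pdivrMr // mulrC.
Qed.

Lemma v_le_bundle_cost i e : v i e <= bundle_cost v (P i) i (P i e).
Proof. by rewrite /bundle_cost (bigD1 e) //= lerDl sumr_ge0. Qed.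

Lemma tick_cap : tick * 2 ^+ cap = wcan ord0.
Proof. by rewrite divfK // expf_neq0 ?pnatr_eq0. Qed.

Lemma cscale_cost_le_cap i e : cscale i * v i e <= tick * 2 ^+ cap.
Proof.
have := cscale_mulr_le (v_ge0 i e) (le_trans (v_le_bundle_cost i e) (P_bounded i (P i e))).
have := wscale_lt_wcan w_gt0 w_sorted (P i e); have := wcan_le_wcan0 w_gt0 w_sorted (P i e).
have := mulr_ge0 (cscale_ge0 i) (v_ge0 i e); rewrite tick_cap; lra.
Qed.

Definition cost_exp i k := round_exp tick cap (cscale i * v i (rho i k)).

Lemma le_scaled_cost i k : cscale i * v i (rho i k) <= tick * 2 ^+ cost_exp i k.
Proof. exact: le_round_up (cscale_cost_le_cap _ _). Qed.

Definition bundle_ticks i j := (\sum_(k | P i (rho i k) == j) 2 ^ cost_exp i k)%N.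

Lemma bundle_ticks_le i j : (bundle_ticks i j <= 2 ^ (cap - wexp j))%N.
Proof.
rewrite -(ler_nat R) -(ler_pM2l tick_gt0) -wcan_ticks natr_sum mulr_sumr.
have rounded_le : \sum_(k | P i (rho i k) == j) tick * (2 ^ cost_exp i k)%:R
    <= 2 * cscale i * bundle_cost v (P i) i j + m%:R * tick.
  rewrite /bundle_cost [X in _ <= _ * X + _](reindex_inj (@perm_inj _ (rho i))) mulr_sumr.
  apply: (@le_trans _ _ (\sum_(k | P i (rho i k) == j) (2 * cscale i * v i (rho i k) + tick))).
    apply: ler_sum => k _; rewrite natrX -mulrA.
    exact: (round_up_le cap tick_gt0 (mulr_ge0 (cscale_ge0 i) (v_ge0 i (rho i k)))).
  rewrite big_split /= lerD2l [X in _ <= X](_ : _ = \sum_(k < m) tick); last first.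
    by rewrite sumr_const card_ord mulr_natl.
  rewrite [X in _ <= X](bigID (fun k => P i (rho i k) == j)) /= lerDl.
  by rewrite sumr_ge0 // => *; exact: ltW tick_gt0.
have := cscale_mulr_le (bundle_cost_ge0 v_ge0 (P i) i j) (P_bounded i j).
have := m_tick_lt_gap j; rewrite /gap; lra.
Qed.

Definition pad i j := (2 ^ (cap - wexp j) - bundle_ticks i j)%N.
Definition npad i := (\sum_j pad i j)%N.
Definition nfill := (\sum_j 2 ^ (cap - wexp j))%N.

Lemma npad_le i : (npad i <= nfill)%N.
Proof. by apply: leq_sum => j _; rewrite leq_subr. Qed.

Definition filler i : {ffun 'I_nfill -> 'I_n.+1} := block_index nfill (pad i).

Lemma card_filler i j :
  #|[pred t : 'I_nfill | (t < npad i)%N && (filler i t == j)]| = pad i j.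
Proof. exact: card_block_index (npad_le i) j. Qed.

(* The chores of the rounded instance are ['I_(m + nfill)]: for agent i,
   chore [lshift nfill k] stands for her k-th most costly real chore [rho i k],
   and the last [nfill] chores are fillers. *)
Definition vcan i (e : 'I_(m + nfill)) : R :=
  match split e with
  | inl k => tick * 2 ^+ cost_exp i k
  | inr t => if (t < npad i)%N then tick else 0
  end.

Definition Pcan i : {ffun 'I_(m + nfill) -> 'I_n.+1} :=
  [ffun e => match split e with inl k => P i (rho i k) | inr t => filler i t end].

Lemma vcan_lshift i k : vcan i (lshift nfill k) = tick * 2 ^+ cost_exp i k.
Proof. by rewrite /vcan (unsplitK (inl k)). Qed.

Lemma bundle_cost_Pcan i j : bundle_cost vcan (Pcan i) i j = wcan j.
Proof.
rewrite /bundle_cost big_split_ord /=.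
under eq_bigl do rewrite ffunE (unsplitK (inl _)).
under eq_bigr do rewrite vcan_lshift.
under [in X in _ + X]eq_bigl do rewrite ffunE (unsplitK (inr _)).
under [in X in _ + X]eq_bigr do rewrite /vcan (unsplitK (inr _)).
rewrite -big_mkcondr /= wcan_ticks -(subnKC (bundle_ticks_le i j)) -/(pad i j).
rewrite -card_filler natrD mulrDr; congr (_ + _).
  by rewrite natr_sum mulr_sumr; apply: eq_bigr => k _; rewrite natrX.
rewrite -sum1_card natr_sum mulr_sumr.
by apply: eq_big => [t|t _]; rewrite ?inE 1?andbC ?mulr1.
Qed.

Lemma sum_vcan i : \sum_e vcan i e = 1.
Proof.
rewrite -(sum_bundle_cost vcan (Pcan i) i) -(sum_wcan w_gt0).
by apply: eq_bigr => j _; rewrite bundle_cost_Pcan.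
Qed.

Lemma vcan_ge0 i e : 0 <= vcan i e.
Proof.
have tick_ge0 := ltW tick_gt0.
by rewrite /vcan; case: split => [k|t]; [rewrite mulr_ge0 ?exprn_ge0 | case: ifP].
Qed.

Lemma vcan_sorted i (e e' : 'I_(m + nfill)) : (e <= e')%N -> vcan i e' <= vcan i e.
Proof.
have tick_ge0 := ltW tick_gt0.
rewrite /vcan; case: splitP => [k' ->|t' ->]; case: splitP => [k ->|t ->] le_ee'.
- rewrite ler_pM2l ?tick_gt0 // ler_eXn2l ?ltr1n // round_exp_mono //.
  by rewrite ler_wpM2l ?cscale_ge0 ?rho_sorted.
- by move: le_ee'; rewrite leqNgt (leq_trans (ltn_ord k')) ?leq_addr.
- case: ifP => _; last by rewrite mulr_ge0 ?exprn_ge0.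
  by rewrite ler_peMr // exprn_ege1 ?ler1n.
- case: ifP => [lt_t'|_]; last by case: ifP.
  by rewrite (leq_ltn_trans _ lt_t') // -(leq_add2l m).
Qed.

Lemma vcan_pow i e : vcan i e = 0 \/ exists p : nat, vcan i e = wcan ord0 / 2 ^+ p.
Proof.
have tickE k : (k <= cap)%N -> tick * 2 ^+ k = wcan ord0 / 2 ^+ (cap - k).
  move=> le_k; rewrite -tick_cap -{1}(subnKC le_k) exprD mulrA mulfK //.
  by rewrite expf_neq0 ?pnatr_eq0.
rewrite /vcan; case: split => [k|t].
  by right; exists (cap - cost_exp i k)%N; rewrite tickE ?round_exp_le_cap.
by case: ifP => _; [right; exists cap; rewrite -tick_cap mulfK ?expf_neq0 ?pnatr_eq0 | left].
Qed.

Lemma canonical_rounded : canonical_instance wcan vcan.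
Proof.
split.
- by split; [exact: wcan_gt0 | exact: vcan_ge0].
- split; first exact: wcan_sorted.
  by split; [exact: sum_wcan | move=> j; exists (wexp j); rewrite wcanE].
- by split; [exact: sum_vcan | exact: vcan_pow].
- by move=> i e e'; exact: vcan_sorted.
- move=> i; apply: (WMMS_eq_weight (wcan_gt0 w_gt0) (A := Pcan i)).
    by rewrite sum_vcan sum_wcan.
  by move=> j; rewrite bundle_cost_Pcan.
Qed.

Lemma v_eq0_of_mu_eq0 i e : mu i = 0 -> v i e = 0.
Proof.
move=> mu0; apply/eqP; rewrite eq_le v_ge0 andbT -(mul0r (w (P i e))) -mu0.
exact: le_trans (v_le_bundle_cost i e) (P_bounded i (P i e)).
Qed.

Lemma exists_4alpha_alloc_sorted (alpha : R) : 1 <= alpha -> alpha_WMMS_on_canonical alpha ->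
  exists A : {ffun 'I_m -> 'I_n.+1}, forall i, bundle_cost v A i i <= 4 * alpha * (mu i * w i).
Proof.
move=> alpha_ge1 canon_ok.
have [A' A'_WMMS] := canon_ok _ _ _ _ canonical_rounded.
have [A le_A] := picking_sequence (fun k => A' (lshift nfill k)) rho_sorted.
exists A => i; apply: le_trans (le_A i) _.
have [mu0|mu_neq0] := eqVneq (mu i) 0.
  by rewrite mu0 mul0r mulr0 big1 // => k _; rewrite v_eq0_of_mu_eq0.
have mu_gt0 : 0 < mu i by rewrite lt_def mu_neq0 mu_ge0.
have cscale_gt0 : 0 < cscale i by rewrite divr_gt0 ?mulr_gt0 ?wscale_gt0.
have canon_le : \sum_(k | A' (lshift nfill k) == i) vcan i (lshift nfill k) <= alpha * wcan i.
  have WMMS_can : WMMS wcan vcan i = wcan i by case: canonical_rounded => _ _ _ _ ->.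
  rewrite -WMMS_can; apply: le_trans _ (A'_WMMS i).
  by rewrite /bundle_cost big_split_ord /= lerDl sumr_ge0 // => t _; exact: vcan_ge0.
apply: (@le_trans _ _ ((\sum_(k | A' (lshift nfill k) == i) vcan i (lshift nfill k)) / cscale i)).
  rewrite mulr_suml; apply: ler_sum => k _.
  by rewrite ler_pdivlMr // mulrC vcan_lshift le_scaled_cost.
rewrite ler_pdivrMr //; apply: le_trans canon_le _.
have -> : 4 * alpha * (mu i * w i) * cscale i = alpha * (2 * wscale * w i).
  by rewrite /cscale; field.
by rewrite ler_wpM2l ?(le_trans ler01) ?wcan_le_wscale.
Qed.

End CanonicalInstance.

Lemma exists_4alpha_alloc (R : realType) (alpha : R) (n m : nat)
    (w : 'I_n.+1 -> R) (v : 'I_n.+1 -> 'I_m -> R)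
    (mu : 'I_n.+1 -> R) (P : 'I_n.+1 -> {ffun 'I_m -> 'I_n.+1}) :
  1 <= alpha -> alpha_WMMS_on_canonical alpha ->
  (forall i, 0 < w i) -> (forall i e, 0 <= v i e) -> (forall i, 0 <= mu i) ->
  (forall i j, bundle_cost v (P i) i j <= mu i * w j) ->
  exists A : {ffun 'I_m -> 'I_n.+1}, forall i, bundle_cost v A i i <= 4 * alpha * (mu i * w i).
Proof.
move=> alpha_ge1 canon_ok w_gt0 v_ge0 mu_ge0 P_bounded.
have [s s_sorted] := exists_sorting_perm w.
pose v' k := v (s k).
pose P' k := [ffun e => (s^-1)%g (P (s k) e)].
have [rho rho_sorted] := fin_all_exists (fun k => exists_sorting_perm (v' k)).
have P'_bounded k j : bundle_cost v' (P' k) k j <= mu (s k) * w (s j).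
  apply: le_trans (P_bounded (s k) (s j)); rewrite le_eqVlt; apply/orP; left; apply/eqP.
  by apply: eq_bigl => e; rewrite ffunE -(inj_eq (@perm_inj _ s)) permKV.
have [A' le_A'] := exists_4alpha_alloc_sorted (fun k => w_gt0 (s k)) (fun k => v_ge0 (s k))
  s_sorted rho_sorted (fun k => mu_ge0 (s k)) P'_bounded alpha_ge1 canon_ok.
exists [ffun e => s (A' e)] => i; rewrite -(permKV s i).
apply: le_trans (le_A' _); rewrite le_eqVlt; apply/orP; left; apply/eqP.
by apply: eq_bigl => e; rewrite ffunE (inj_eq (@perm_inj _ s)).
Qed.

Theorem theorem3p1 (R : realType) (alpha : R) (halpha : 1 <= alpha)
  (Hcanon : forall (n m : nat) (w : 'I_n.+1 -> R) (v : 'I_n.+1 -> 'I_m -> R),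
      canonical_instance w v ->
      exists A : {ffun 'I_m -> 'I_n.+1}, is_alpha_WMMS alpha w v A) :
  forall (n m : nat) (w : 'I_n.+1 -> R) (v : 'I_n.+1 -> 'I_m -> R),
    valid_instance w v ->
    exists A : {ffun 'I_m -> 'I_n.+1}, is_alpha_WMMS (4 * alpha) w v A.
Proof.
move=> n m w v [w_gt0 v_ge0].
have [P P_opt] := fin_all_exists (WMMS_attained w v).
have [A le_A] := exists_4alpha_alloc (mu := fun i => max_share w v i (P i)) halpha Hcanon
  w_gt0 v_ge0 (fun i => max_share_ge0 w_gt0 v_ge0 _ i)
  (fun i j => bundle_cost_le_max_share v w_gt0 (P i) i j).
by exists A => i; rewrite P_opt (mulrC (w i)).
Qed.
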